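(* Let $X_r$ be a Dynkin diagram of finite type, $\ell\ge2$, and $U$ either $\mathbb{C}$ or $\mathbb{C}_\xi$. The assignment $Y^{(a)}_m(u)\mapsto \dfrac{M^{(a)}_m(u)}{T^{(a)}_{m-1}(u)T^{(a)}_{m+1}(u)}$ ($a\in I$, $1\le m\le t_a\ell-1$, $u\in U$), where $T^{(0)}_k(u)=T^{(a)}_0(u)=T^{(a)}_{t_a\ell}(u)=1$, defines a ring homomorphism $\varphi_\ell:\mathcal{Y}_\ell(X_r)\to\mathcal{T}_\ell(X_r)$.
   Context: Rings are commutative with identity. $\mathbb{C}_\xi:=\mathbb{C}/(2\pi\sqrt{-1}/\xi)\mathbb{Z}$, $\xi\in\mathbb{C}\setminus2\pi\sqrt{-1}\mathbb{Q}$. Enumeration of $I=\{1,\dots,r\}$: $A_r$: chain; $B_r$: chain with double bond between $r-1,r$, $\alpha_r$ short; $C_r$: same, $\alpha_r$ long, others short; $D_r$: chain $1-\cdots-(r-2)$, $r-1,r$ joined to $r-2$; $E_6$: chain $1-2-3-5-6$, $4$ joined to $3$; $E_7$: chain $1-\cdots-6$, $7$ joined to $3$; $E_8$: chain $1-\cdots-7$, $8$ joined to $5$; $F_4$: chain $1-2-3-4$, double bond between $2,3$, $\alpha_1,\alpha_2$ long; $G_2$: $\alpha_1$ long. $C$ Cartan matrix; $t_a=2$ for short $a$ in $B_r,C_r,F_4$, $t_2=3$ in $G_2$, else $1$. $M^{(a)}_m(u)$: simply laced $\prod_{b:C_{ab}=-1}T^{(b)}_m(u)$; $B_r$: $T^{(a-1)}_m(u)T^{(a+1)}_m(u)$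 ($a\le r-2$), $M^{(r-1)}_m=T^{(r-2)}_m(u)T^{(r)}_{2m}(u)$, $M^{(r)}_{2m}=T^{(r-1)}_m(u-\frac12)T^{(r-1)}_m(u+\frac12)$, $M^{(r)}_{2m+1}=T^{(r-1)}_m(u)T^{(r-1)}_{m+1}(u)$; $C_r$: $T^{(a-1)}_m(u)T^{(a+1)}_m(u)$ ($a\le r-2$), $M^{(r-1)}_{2m}=T^{(r-2)}_{2m}(u)T^{(r)}_m(u-\frac12)T^{(r)}_m(u+\frac12)$, $M^{(r-1)}_{2m+1}=T^{(r-2)}_{2m+1}(u)T^{(r)}_m(u)T^{(r)}_{m+1}(u)$, $M^{(r)}_m=T^{(r-1)}_{2m}(u)$; $F_4$: $M^{(1)}_m=T^{(2)}_m$, $M^{(2)}_m=T^{(1)}_m(u)T^{(3)}_{2m}(u)$, $M^{(3)}_{2m}=T^{(2)}_m(u-\frac12)T^{(2)}_m(u+\frac12)T^{(4)}_{2m}(u)$, $M^{(3)}_{2m+1}=T^{(2)}_m(u)T^{(2)}_{m+1}(u)T^{(4)}_{2m+1}(u)$, $M^{(4)}_m=T^{(3)}_m(u)$; $G_2$: $M^{(1)}_m=T^{(2)}_{3m}(u)$, $M^{(2)}_{3m}=T^{(1)}_m(u-\frac23)T^{(1)}_m(u)T^{(1)}_m(u+\frac23)$, $M^{(2)}_{3m+1}=T^{(1)}_m(u-\frac13)T^{(1)}_m(u+\frac13)T^{(1)}_{m+1}(u)$, $M^{(2)}_{3m+2}=T^{(1)}_m(u)T^{(1)}_{m+1}(u-\frac13)T^{(1)}_{m+1}(u+\frac13)$.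 $\mathcal{T}_\ell(X_r)$: ring with generators $T^{(a)}_m(u)^{\pm1}$ ($1\le m\le t_a\ell-1$) and relations $T^{(a)}_m(u-\tfrac1{t_a})T^{(a)}_m(u+\tfrac1{t_a})=T^{(a)}_{m-1}(u)T^{(a)}_{m+1}(u)+M^{(a)}_m(u)$ for $a\in I$, $1\le m\le t_a\ell-1$, $u\in U$, where $T^{(0)}_k=T^{(a)}_0=T^{(a)}_{t_a\ell}=1$. $\mathcal{Y}_\ell(X_r)$: ring with generators $Y^{(a)}_m(u)^{\pm1}$, $(1+Y^{(a)}_m(u))^{-1}$ ($a\in I$, $1\le m\le t_a\ell-1$, $u\in U$) and relations, for the same range, $Y^{(a)}_m(u-\tfrac1{t_a})Y^{(a)}_m(u+\tfrac1{t_a})=\dfrac{N^{(a)}_m(u)}{(1+Y^{(a)}_{m-1}(u)^{-1})(1+Y^{(a)}_{m+1}(u)^{-1})}$, where $Y^{(0)}_k=0$, $Y^{(a)}_0(u)^{-1}=Y^{(a)}_{t_a\ell}(u)^{-1}=0$, and: simply laced $N^{(a)}_m=\prod_{b:C_{ab}=-1}(1+Y^{(b)}_m(u))$; $B_r$: $(1+Y^{(a-1)}_m(u))(1+Y^{(a+1)}_m(u))$ ($a\le r-2$), $N^{(r-1)}_m=(1+Y^{(r-2)}_m(u))(1+Y^{(r)}_{2m-1}(u))(1+Y^{(r)}_{2m+1}(u))(1+Y^{(r)}_{2m}(u-\frac12))(1+Y^{(r)}_{2m}(u+\frac12))$, $N^{(r)}_{2m}=1+Y^{(r-1)}_m(u)$,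 $N^{(r)}_{2m+1}=1$; $C_r$: $(1+Y^{(a-1)}_m(u))(1+Y^{(a+1)}_m(u))$ ($a\le r-2$), $N^{(r-1)}_{2m}=(1+Y^{(r-2)}_{2m}(u))(1+Y^{(r)}_m(u))$, $N^{(r-1)}_{2m+1}=1+Y^{(r-2)}_{2m+1}(u)$, $N^{(r)}_m=(1+Y^{(r-1)}_{2m-1}(u))(1+Y^{(r-1)}_{2m+1}(u))(1+Y^{(r-1)}_{2m}(u-\frac12))(1+Y^{(r-1)}_{2m}(u+\frac12))$; $F_4$: $N^{(1)}_m=1+Y^{(2)}_m(u)$, $N^{(2)}_m=(1+Y^{(1)}_m(u))(1+Y^{(3)}_{2m-1}(u))(1+Y^{(3)}_{2m+1}(u))(1+Y^{(3)}_{2m}(u-\frac12))(1+Y^{(3)}_{2m}(u+\frac12))$, $N^{(3)}_{2m}=(1+Y^{(2)}_m(u))(1+Y^{(4)}_{2m}(u))$, $N^{(3)}_{2m+1}=1+Y^{(4)}_{2m+1}(u)$, $N^{(4)}_m=1+Y^{(3)}_m(u)$; $G_2$: $N^{(1)}_m=(1+Y^{(2)}_{3m-2}(u))(1+Y^{(2)}_{3m+2}(u))(1+Y^{(2)}_{3m}(u))\prod_{\epsilon=\pm1}(1+Y^{(2)}_{3m-1}(u+\frac\epsilon3))(1+Y^{(2)}_{3m+1}(u+\frac\epsilon3))(1+Y^{(2)}_{3m}(u+\frac{2\epsilon}3))$, $N^{(2)}_{3m}=1+Y^{(1)}_m(u)$, $N^{(2)}_{3m+1}=N^{(2)}_{3m+2}=1$.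 *)

(* Rings presented by generators and relations are built
   honestly as quotients of free commutative polynomial rings over Z
   (multinomials' monoid algebras {malg int[cmonom V]}) by the ideal
   generated by the relations.  ℂ is Stdlib's R[i] (real_closed complex). *)
From HB Require Import structures.
From mathcomp Require Import all_boot all_order all_algebra.
From mathcomp Require Import generic_quotient ring_quotient.
From mathcomp Require Import boolp.
From mathcomp Require Import Rstruct.
From mathcomp Require Import complex.
From mathcomp Require Import monalg.
From Stdlib Require Rtrigo1.

Set Implicit Arguments.
Unset Strict Implicit.
Unset Printing Implicit Defensive.

Import Order.TTheory GRing.Theory Num.Theory.
Local Open Scope ring_scope.
Local Open Scope quotient_scope.

Section GenIdeal.
Variables (R : comPzRingType) (S : R -> Prop).

Definition gen_ideal : {pred R} := fun x =>
  `[< exists s : seq (R * R),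
        (forall p, p \in s -> S p.2) /\ x = \sum_(p <- s) p.1 * p.2 >].

Lemma gen_ideal_zmod : zmod_closed gen_ideal.
Proof.
split.
  by apply/asboolP; exists [::]; split => //; rewrite big_nil.
move=> x y /asboolP[s [Hs ->]] /asboolP[t [Ht ->]].
apply/asboolP; exists (s ++ [seq (- p.1, p.2) | p <- t]); split.
  move=> p; rewrite mem_cat => /orP[/Hs //|/mapP[q /Ht Hq ->]] //.
rewrite big_cat big_map /= -sumrN; congr (_ + _).
by apply: eq_bigr => p _; rewrite mulNr.
Qed.

HB.instance Definition _ := GRing.isZmodClosed.Build R gen_ideal
  gen_ideal_zmod.

Lemma gen_idealM a x : x \in gen_ideal -> a * x \in gen_ideal.
Proof.
move=> /asboolP[s [Hs ->]]; apply/asboolP.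
exists [seq (a * p.1, p.2) | p <- s]; split.
  by move=> p /mapP[q /Hs Hq ->].
rewrite big_map mulr_sumr; apply: eq_bigr => p _; by rewrite mulrA.
Qed.

Lemma gen_ideal_gen x : S x -> x \in gen_ideal.
Proof.
move=> Sx; apply/asboolP; exists [:: (1, x)]; split.
  by move=> p; rewrite inE => /eqP->.
by rewrite big_seq1 mul1r.
Qed.

Definition quot_ring := @Quotient.quot R gen_ideal.
HB.instance Definition _ := GRing.Zmodule.on quot_ring.
HB.instance Definition _ := Choice.on quot_ring.

Local Notation piq := (\pi_quot_ring).

Definition qone : quot_ring := piq 1.
Fact qmul_key : unit. Proof. by []. Qed.
Definition qmul : quot_ring -> quot_ring -> quot_ring :=
  locked_with qmul_key (fun x y => piq (repr x * repr y)).
Canonical qmul_unlockable := [unlockable fun qmul].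

Lemma equiv_ideal (x y : R) : (piq x == piq y) = (x - y \in gen_ideal).
Proof. by rewrite Quotient.idealrBE. Qed.

Lemma pi_qmul x y : piq (x * y) = qmul (piq x) (piq y).
Proof.
rewrite [qmul]unlock; apply/eqP; rewrite equiv_ideal.
have Ex : x - repr (piq x) \in gen_ideal by rewrite -equiv_ideal reprK.
have Ey : y - repr (piq y) \in gen_ideal by rewrite -equiv_ideal reprK.
have -> : x * y - repr (piq x) * repr (piq y) =
          y * (x - repr (piq x)) + repr (piq x) * (y - repr (piq y)).
  by rewrite !mulrBr [y * x]mulrC [y * repr _]mulrC addrA subrK.
by rewrite rpredD // gen_idealM.
Qed.

Lemma pi_qadd x y : piq (x + y) = piq x + piq y.
Proof. by rewrite raddfD. Qed.

Lemma qmulA : associative qmul.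
Proof.
elim/quotW=> x; elim/quotW=> y; elim/quotW=> z.
by rewrite -!pi_qmul mulrA.
Qed.

Lemma qmulC : commutative qmul.
Proof. by elim/quotW=> x; elim/quotW=> y; rewrite -!pi_qmul mulrC. Qed.

Lemma qmul1 : left_id qone qmul.
Proof. by elim/quotW=> x; rewrite /qone -pi_qmul mul1r. Qed.

Lemma qmulDl : left_distributive qmul +%R.
Proof.
elim/quotW=> x; elim/quotW=> y; elim/quotW=> z.
by rewrite -pi_qadd -!pi_qmul mulrDl pi_qadd.
Qed.

HB.instance Definition _ := GRing.Zmodule_isComPzRing.Build quot_ring
  qmulA qmulC qmul1 qmulDl.

Definition qproj (x : R) : quot_ring := piq x.

End GenIdeal.

(** * Dynkin diagrams of finite type (with the enumeration of the paper)    *)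

Inductive dynkin :=
  | TA of nat | TB of nat | TC of nat | TD of nat
  | TE6 | TE7 | TE8 | TF4 | TG2.

Definition rank (X : dynkin) : nat :=
  match X with
  | TA r | TB r | TC r | TD r => r
  | TE6 => 6 | TE7 => 7 | TE8 => 8 | TF4 => 4 | TG2 => 2
  end.

Definition valid_dynkin (X : dynkin) : bool :=
  match X with
  | TA r => 1 <= r | TB r => 2 <= r | TC r => 2 <= r | TD r => 4 <= r
  | _ => true
  end%N.

Definition tnum (X : dynkin) (a : nat) : nat :=
  match X with
  | TB r => if a == r then 2 else 1
  | TC r => if a < r then 2 else 1
  | TF4 => if 3 <= a then 2 else 1
  | TG2 => if a == 2 then 3 else 1
  | _ => 1
  end%N.

Definition sl_edge0 (X : dynkin) (a b : nat) : bool :=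
  match X with
  | TA r => (a.+1 == b)
  | TD r => ((a.+1 == b) && (b <= r - 2)) || ((a == r - 2) && (b == r))
  | TE6 => ((a, b) \in [:: (1, 2); (2, 3); (3, 5); (5, 6); (3, 4)])
  | TE7 => ((a, b) \in [:: (1, 2); (2, 3); (3, 4); (4, 5); (5, 6); (3, 7)])
  | TE8 => ((a, b) \in [:: (1, 2); (2, 3); (3, 4); (4, 5); (5, 6); (6, 7);
                          (5, 8)])
  | _ => false
  end%N.

(** D_r: chain 1-...-(r-2) and r-1, r joined to r-2. *)
Definition sl_edge (X : dynkin) (a b : nat) : bool :=
  sl_edge0 X a b || sl_edge0 X b a ||
  (if X is TD r then ((a == r - 2) && (b == r - 1)) ||
                     ((b == r - 2) && (a == r - 1)) else false)%N.

Definition adj (X : dynkin) (a : nat) : seq nat :=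
  [seq b <- iota 1 (rank X) | sl_edge X a b].

Section MN.
Variables (U : zmodType) (iota : rat -> U).
Definition sh (u : U) (q : rat) : U := u + iota q.

Variable (R : pzRingType).

(** [T a k u] stands for T^{(a)}_k(u) (boundary conventions are built in
    the function T supplied). *)
Definition Mfun (T : nat -> nat -> U -> R) (X : dynkin) (a m : nat) (u : U)
  : R :=
  let h := (1 / 2)%R : rat in
  let th := (1 / 3)%R : rat in
  match X with
  | TB r =>
      if (a <= r - 2)%N then T a.-1 m u * T a.+1 m u
      else if a == (r - 1)%N then T (r - 2)%N m u * T r m.*2 u
      else if odd m then T (r - 1)%N m./2 u * T (r - 1)%N m./2.+1 u
      else T (r - 1)%N m./2 (sh u (- h)) * T (r - 1)%N m./2 (sh u h)
  | TC r =>
      if (a <= r - 2)%N then T a.-1 m u * T a.+1 m u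
      else if a == (r - 1)%N then
        (if odd m then T (r - 2)%N m u * T r m./2 u * T r m./2.+1 u
         else T (r - 2)%N m u * T r m./2 (sh u (- h)) * T r m./2 (sh u h))
      else T (r - 1)%N m.*2 u
  | TF4 =>
      if a == 1%N then T 2 m u
      else if a == 2%N then T 1 m u * T 3 m.*2 u
      else if a == 3%N then
        (if odd m then T 2 m./2 u * T 2 m./2.+1 u * T 4 m u
         else T 2 m./2 (sh u (- h)) * T 2 m./2 (sh u h) * T 4 m u)
      else T 3 m u
  | TG2 =>
      if a == 1%N then T 2 (3 * m)%N u
      else if ((m %% 3)%N == 0)%N then
        T 1 (m %/ 3)%N (sh u (- (2 * th))) * T 1 (m %/ 3)%N u
          * T 1 (m %/ 3)%N (sh u (2 * th))
      else if ((m %% 3)%N == 1)%N then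
        T 1 (m %/ 3)%N (sh u (- th)) * T 1 (m %/ 3)%N (sh u th)
          * T 1 (m %/ 3)%N.+1 u
      else
        T 1 (m %/ 3)%N u * T 1 (m %/ 3)%N.+1 (sh u (- th))
          * T 1 (m %/ 3)%N.+1 (sh u th)
  | _ => \prod_(b <- adj X a) T b m u
  end.

(** [Y a k u] stands for Y^{(a)}_k(u) (with Y^{(0)}_k = 0 built in). *)
Definition Nfun (Y : nat -> nat -> U -> R) (X : dynkin) (a m : nat) (u : U)
  : R :=
  let h := (1 / 2)%R : rat in
  let th := (1 / 3)%R : rat in
  let P b k v := 1 + Y b k v in
  match X with
  | TB r =>
      if (a <= r - 2)%N then P a.-1 m u * P a.+1 m u
      else if a == (r - 1)%N then
        P (r - 2)%N m u * P r m.*2.-1 u * P r m.*2.+1 u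
          * P r m.*2 (sh u (- h)) * P r m.*2 (sh u h)
      else if odd m then 1
      else P (r - 1)%N m./2 u
  | TC r =>
      if (a <= r - 2)%N then P a.-1 m u * P a.+1 m u
      else if a == (r - 1)%N then
        (if odd m then P (r - 2)%N m u
         else P (r - 2)%N m u * P r m./2 u)
      else P (r - 1)%N m.*2.-1 u * P (r - 1)%N m.*2.+1 u
             * P (r - 1)%N m.*2 (sh u (- h)) * P (r - 1)%N m.*2 (sh u h)
  | TF4 =>
      if a == 1%N then P 2 m u
      else if a == 2%N then
        P 1 m u * P 3 m.*2.-1 u * P 3 m.*2.+1 u
          * P 3 m.*2 (sh u (- h)) * P 3 m.*2 (sh u h)
      else if a == 3%N then
        (if odd m then P 4 m u else P 2 m./2 u * P 4 m u)
      else P 3 m u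
  | TG2 =>
      if a == 1%N then
        P 2 (3 * m - 2)%N u * P 2 (3 * m + 2)%N u * P 2 (3 * m)%N u
        * (P 2 (3 * m - 1)%N (sh u (- th)) * P 2 (3 * m + 1)%N (sh u (- th))
             * P 2 (3 * m)%N (sh u (- (2 * th))))
        * (P 2 (3 * m - 1)%N (sh u th) * P 2 (3 * m + 1)%N (sh u th)
             * P 2 (3 * m)%N (sh u (2 * th)))
      else if ((m %% 3)%N == 0)%N then P 1 (m %/ 3)%N u
      else 1
  | _ => \prod_(b <- adj X a) P b m u
  end.

End MN.

Section Rings.
Variables (X : dynkin) (l : nat) (U : zmodType) (iota : rat -> U).

Definition validx (p : nat * nat) : bool :=
  ((1 <= p.1 <= rank X) && (1 <= p.2 < tnum X p.1 * l))%N.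

Definition Idx := {p : nat * nat | validx p}.

Definition tinv (a : nat) : rat := ((tnum X a)%:R)^-1.

(** ** The ring T_l(X_r).
    Generators: T^{(a)}_m(u) (flag [false]) and T^{(a)}_m(u)^{-1}
    (flag [true]), for (a, m) admissible and u in U. *)
Definition TVar := (bool * Idx * U)%type.
Definition PolT := {malg int[cmonom TVar]}.

(** The variable (inv, a, k, u) if (a, k) is admissible, and 1 otherwise
    (this encodes T^{(0)}_k = T^{(a)}_0 = T^{(a)}_{t_a l} = 1). *)
Definition var_T (inv : bool) (a k : nat) (u : U) : PolT :=
  if insub (a, k) is Some i then << ucm ((inv, i, u) : TVar) >> else 1.

Definition Tv := var_T false.
Definition Tiv := var_T true.

Definition Trel (p : PolT) : Prop :=
  (exists (i : Idx) (u : U),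
      p = << ucm ((false, i, u) : TVar) >> * << ucm ((true, i, u) : TVar) >> - 1)
  \/ (exists (a m : nat) (u : U), validx (a, m) /\
      p = Tv a m (sh iota u (- tinv a)) * Tv a m (sh iota u (tinv a))
          - (Tv a m.-1 u * Tv a m.+1 u + Mfun iota Tv X a m u)).

Definition TRing := quot_ring Trel.

Definition TT (a k : nat) (u : U) : TRing := qproj Trel (Tv a k u).
Definition TTinv (a k : nat) (u : U) : TRing := qproj Trel (Tiv a k u).

(** ** The ring Y_l(X_r).
    Generators (kind 0) Y^{(a)}_m(u), (kind 1) Y^{(a)}_m(u)^{-1},
    (kind 2) (1 + Y^{(a)}_m(u))^{-1}. *)
Definition YVar := ('I_3 * Idx * U)%type.
Definition PolY := {malg int[cmonom YVar]}.

Definition yk0 : 'I_3 := @Ordinal 3 0 isT.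
Definition yk1 : 'I_3 := @Ordinal 3 1 isT.
Definition yk2 : 'I_3 := @Ordinal 3 2 isT.

(** The variable (kind, a, k, u) if (a, k) is admissible, and 0 otherwise
    (this encodes Y^{(0)}_k = 0 and Y^{(a)}_0^{-1} = Y^{(a)}_{t_a l}^{-1} = 0). *)
Definition var_Y (kind : 'I_3) (a k : nat) (u : U) : PolY :=
  if insub (a, k) is Some i then << ucm ((kind, i, u) : YVar) >> else 0.

Definition Yv := var_Y yk0.
Definition Yiv := var_Y yk1.

(** Defining relations of Y_l(X_r), written as elements to be set to 0.
    The Y-system relation
      Y(u - 1/t_a) Y(u + 1/t_a) = N / ((1 + Y_{m-1}^{-1}) (1 + Y_{m+1}^{-1}))
    is stated after clearing the denominator. *)
Definition Yrel (p : PolY) : Prop :=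
  (exists (i : Idx) (u : U),
      p = << ucm ((yk0, i, u) : YVar) >> * << ucm ((yk1, i, u) : YVar) >> - 1)
  \/ (exists (i : Idx) (u : U),
      p = (1 + << ucm ((yk0, i, u) : YVar) >>) * << ucm ((yk2, i, u) : YVar) >>
          - 1)
  \/ (exists (a m : nat) (u : U), validx (a, m) /\
      p = Yv a m (sh iota u (- tinv a)) * Yv a m (sh iota u (tinv a))
            * ((1 + Yiv a m.-1 u) * (1 + Yiv a m.+1 u))
          - Nfun iota Yv X a m u).

Definition YRing := quot_ring Yrel.

Definition YY (a m : nat) (u : U) : YRing := qproj Yrel (Yv a m u).

Definition phi_image (a m : nat) (u : U) : TRing :=
  Mfun iota TT X a m u * TTinv a m.-1 u * TTinv a m.+1 u.

Definition defines_ring_hom : Prop :=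
  exists phi : {rmorphism YRing -> TRing},
    forall (a m : nat) (u : U), validx (a, m) -> phi (YY a m u) = phi_image a m u.

End Rings.

Definition Cc := (Rdefinitions.R)[i].

Definition iota_C (q : rat) : Cc := ratr q.

Definition two_pi_i : Cc := Complex 0 (2 * Rtrigo1.PI).

Section Cxi.
Variable xi : Cc.

Definition lattice_xi : {pred Cc} := fun z =>
  `[< exists n : int, z = n%:~R * (two_pi_i / xi) >].

Lemma lattice_xi_zmod : zmod_closed lattice_xi.
Proof.
split; first by apply/asboolP; exists 0; rewrite mul0r.
move=> x y /asboolP[n ->] /asboolP[k ->]; apply/asboolP; exists (n - k).
by rewrite -mulrBl -intrB.
Qed.

HB.instance Definition _ := GRing.isZmodClosed.Build Cc lattice_xi
  lattice_xi_zmod.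

Definition Cxi := @Quotient.quot Cc lattice_xi.
HB.instance Definition _ := GRing.Zmodule.on Cxi.

Definition iota_xi (q : rat) : Cxi := \pi_Cxi (ratr q).
End Cxi.

(** Under φ, 1 + Y^{(a)}_m(u) goes by the T-system to
    T^{(a)}_m(u - 1/t_a) T^{(a)}_m(u + 1/t_a) / (T^{(a)}_{m-1}(u) T^{(a)}_{m+1}(u)),
    and 1 + Y^{(a)}_m(u)^{-1} to the same numerator over M^{(a)}_m(u).  After
    these substitutions the Y-system relation becomes an identity between
    Laurent monomials in the T's,
      M_m(u - 1/t_a) M_m(u + 1/t_a) ∏_N T_{k-1} T_{k+1}
        = M_{m-1}(u) M_{m+1}(u) ∏_N T_k(v - 1/t_b) T_k(v + 1/t_b),
    the products running over the factors (1 + Y^{(b)}_k(v)) of N^{(a)}_m(u);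
    it holds for arbitrary T and is checked diagram by diagram.  The boundary
    conventions T^{(a)}_0 = T^{(a)}_{t_a l} = 1 make the same computation work
    at the ends m = 1 and m = t_a l - 1.  Since Y_l(X_r) and T_l(X_r) are
    presented by generators and relations, φ exists once the relations of
    Y_l(X_r) hold for the images of the generators. *)
From Pilot Require Import Defs.
From HB Require Import structures.
From mathcomp Require Import all_boot all_order all_algebra.
From mathcomp Require Import generic_quotient ring_quotient boolp.
From mathcomp Require Import Rstruct complex monalg finmap.
From mathcomp Require Import ring zify.

Set Implicit Arguments.
Unset Strict Implicit.
Unset Printing Implicit Defensive.
Import GRing.Theory.
Local Open Scope ring_scope.
Local Open Scope quotient_scope.

(* The library's [mmap] needs a nontrivial target ring, but the presented
   rings may be zero. *)
Section MalgEval.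
Variables (V : choiceType) (S : comPzRingType) (v : V -> S).

Definition cmonom_eval (m : cmonom V) : S := \prod_(i <- finsupp m) v i ^+ m i.

Lemma cmonom_evalEw (d : {fset V}) (m : cmonom V) : (finsupp m `<=` d)%fset ->
  cmonom_eval m = \prod_(i <- d) v i ^+ m i.
Proof.
move=> le; rewrite /cmonom_eval (big_fset_incl _ le) // => x _.
by rewrite -cmE_eq0 => /eqP ->; rewrite expr0.
Qed.

Lemma cmonom_eval1 : cmonom_eval (@mone _) = 1.
Proof. by rewrite /cmonom_eval mdom1 big_seq_fset0. Qed.

Lemma cmonom_evalM (m1 m2 : cmonom V) :
  cmonom_eval (mmul m1 m2) = cmonom_eval m1 * cmonom_eval m2.
Proof.
rewrite {1}/cmonom_eval mdomD (cmonom_evalEw (fsubsetUl _ (finsupp m2))).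
rewrite (cmonom_evalEw (fsubsetUr (finsupp m1) _)) -big_split /=.
by apply: eq_bigr => i _; rewrite cmM exprD.
Qed.

Lemma cmonom_evalU i : cmonom_eval (ucm i) = v i.
Proof. by rewrite /cmonom_eval mdomU big_seq_fset1 cmUU expr1. Qed.

Definition malg_eval (g : {malg int[cmonom V]}) : S :=
  \sum_(k <- msupp g) (g@_k)%:~R * cmonom_eval k.

Lemma malg_evalEw (d : {fset cmonom V}) g : (msupp g `<=` d)%fset ->
  malg_eval g = \sum_(k <- d) (g@_k)%:~R * cmonom_eval k.
Proof.
move=> le; rewrite /malg_eval (big_fset_incl _ le) // => x _ /mcoeff_outdom ->.
by rewrite mul0r.
Qed.

Lemma malg_evalU c k : malg_eval << c *g k >> = c%:~R * cmonom_eval k.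
Proof. by rewrite (malg_evalEw msuppU_le) big_seq_fset1 mcoeffUU. Qed.

Lemma malg_eval_is_additive : additive malg_eval.
Proof.
move=> g1 g2; rewrite (malg_evalEw (msuppB_le g1 g2)).
rewrite (malg_evalEw (fsubsetUl _ (msupp g2))).
rewrite (malg_evalEw (fsubsetUr (msupp g1) _)) -sumrB.
by apply: eq_bigr => k _; rewrite mcoeffB intrB mulrBl.
Qed.

HB.instance Definition _ := GRing.isAdditive.Build {malg int[cmonom V]} S
  malg_eval malg_eval_is_additive.

Lemma malg_eval_is_multiplicative : multiplicative malg_eval.
Proof.
split=> [g1 g2|]; last by rewrite -mpolyC1E malg_evalU cmonom_eval1 mulr1.
rewrite malgME raddf_sum [malg_eval g1]/malg_eval [malg_eval g2]/malg_eval.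
rewrite mulr_suml; apply: eq_bigr => i _.
rewrite raddf_sum mulr_sumr; apply: eq_bigr => j _.
transitivity ((g1@_i * g2@_j)%:~R * cmonom_eval (mmul i j)).
  exact: malg_evalU.
by rewrite intrM cmonom_evalM; ring.
Qed.

HB.instance Definition _ := GRing.isMultiplicative.Build {malg int[cmonom V]} S
  malg_eval malg_eval_is_multiplicative.

Lemma malg_eval1 : malg_eval 1 = 1. Proof. exact: rmorph1. Qed.

Lemma malg_evalD g h : malg_eval (g + h) = malg_eval g + malg_eval h.
Proof. exact: rmorphD. Qed.

Lemma malg_evalM g h : malg_eval (g * h) = malg_eval g * malg_eval h.
Proof. exact: rmorphM. Qed.

Lemma malg_evalB g h : malg_eval (g - h) = malg_eval g - malg_eval h.
Proof. exact: rmorphB. Qed.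

Lemma malg_eval_prod (I : Type) (s : seq I) (F : I -> {malg int[cmonom V]}) :
  malg_eval (\prod_(i <- s) F i) = \prod_(i <- s) malg_eval (F i).
Proof. exact: rmorph_prod. Qed.

Lemma malg_eval_sub_eq0 g h : malg_eval g = malg_eval h -> malg_eval (g - h) = 0.
Proof. by move=> e; rewrite malg_evalB e subrr. Qed.

Lemma malg_eval_ucm x : malg_eval << ucm x >> = v x.
Proof. by rewrite malg_evalU cmonom_evalU mul1r. Qed.

(* Stated separately because rewriting [malg_eval_ucm] in place compares
   distinct monomials by conversion, which is prohibitively slow. *)
Lemma malg_eval_ucmM x y : malg_eval (<< ucm x >> * << ucm y >>) = v x * v y.
Proof. by rewrite malg_evalM; congr (_ * _); apply: malg_eval_ucm. Qed.

Lemma malg_eval_1D_ucmM x y :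
  malg_eval ((1 + << ucm x >>) * << ucm y >>) = (1 + v x) * v y.
Proof.
rewrite malg_evalM malg_evalD.
by congr ((_ + _) * _); [apply: malg_eval1 | apply: malg_eval_ucm..].
Qed.

End MalgEval.

Section QuotLift.
Variables (R : comPzRingType) (S : R -> Prop).

Lemma qproj_is_additive : additive (qproj S).
Proof. by move=> x y; rewrite /qproj raddfB. Qed.

HB.instance Definition _ := GRing.isAdditive.Build R (quot_ring S) (qproj S)
  qproj_is_additive.

Lemma qproj_is_multiplicative : multiplicative (qproj S).
Proof. by split=> // x y; apply: pi_qmul. Qed.

HB.instance Definition _ := GRing.isMultiplicative.Build R (quot_ring S)
  (qproj S) qproj_is_multiplicative.

Lemma qproj_eq_rel x y : S (x - y) -> qproj S x = qproj S y.
Proof. by move=> Sxy; apply/eqP; rewrite /qproj equiv_ideal gen_ideal_gen. Qed.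

Variables (A : comPzRingType) (f : {rmorphism R -> A}).
Hypothesis f_rel : forall p, S p -> f p = 0.

Lemma rmorph_gen_ideal x : x \in gen_ideal S -> f x = 0.
Proof.
move=> /asboolP[s [Hs ->]]; rewrite rmorph_sum big1_seq // => p /andP[_ /Hs Sp].
by rewrite rmorphM (f_rel Sp) mulr0.
Qed.

(* The proof argument is unused; it only makes the morphism instances below
   applicable to [quot_lift f_rel]. *)
Definition quot_lift (_ : forall p, S p -> f p = 0) (x : quot_ring S) : A :=
  f (repr x).

Lemma quot_liftE r : quot_lift f_rel (qproj S r) = f r.
Proof.
apply/eqP; rewrite -subr_eq0 -rmorphB; apply/eqP/rmorph_gen_ideal.
by rewrite -equiv_ideal reprK.
Qed.

Lemma quot_lift_is_additive : additive (quot_lift f_rel).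
Proof.
elim/quotW=> x; elim/quotW=> y.
by rewrite -[\pi x]/(qproj S x) -[\pi y]/(qproj S y) -raddfB !quot_liftE rmorphB.
Qed.

HB.instance Definition _ := GRing.isAdditive.Build (quot_ring S) A
  (quot_lift f_rel) quot_lift_is_additive.

Lemma quot_lift_is_multiplicative : multiplicative (quot_lift f_rel).
Proof.
split; last by rewrite -[1]/(qproj S 1) quot_liftE rmorph1.
elim/quotW=> x; elim/quotW=> y.
by rewrite -[\pi x]/(qproj S x) -[\pi y]/(qproj S y) -rmorphM !quot_liftE rmorphM.
Qed.

HB.instance Definition _ := GRing.isMultiplicative.Build (quot_ring S) A
  (quot_lift f_rel) quot_lift_is_multiplicative.

End QuotLift.

(** * The identity between the M- and N-products *)

Lemma pos_nat_mod2_cases m : (0 < m)%N ->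
  {j | m = j.*2.+1} + {j | m = j.*2.+2}.
Proof.
move=> m_gt0; case: (boolP (odd m)) => m_odd; first by left; exists m./2; lia.
by right; exists m./2.-1; lia.
Qed.

Lemma pos_nat_mod3_cases m : (0 < m)%N ->
  {j | m = (3 * j).+1} + {j | m = (3 * j).+2} + {j | m = (3 * j).+3}.
Proof.
move=> m_gt0; have : (m %% 3 < 3)%N by rewrite ltn_mod.
case e: (m %% 3)%N => [|[|[|k]]] _ //.
- by right; exists (m %/ 3)%N.-1; lia.
- by left; left; exists (m %/ 3)%N; lia.
- by left; right; exists (m %/ 3)%N; lia.
Qed.

Lemma mem_adj_range (X : dynkin) a b : b \in adj X a -> (1 <= b <= rank X)%N.
Proof. by rewrite /adj mem_filter mem_iota => /andP[_]; lia. Qed.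

Definition nat_affine (c n j : nat) : nat := (c * j + n)%N.
Definition rat_frac (n d : int) : rat := n%:~R / d%:~R.

Section MNProducts.
Variables (X : dynkin) (l : nat) (U : zmodType) (iota : rat -> U).
Hypothesis iotaD : forall p q, iota (p + q) = iota p + iota q.

Local Notation sh := (sh iota).

Lemma sh0 u : sh u 0 = u.
Proof.
have iota0 : iota 0 = 0 by apply: (addrI (iota 0)); rewrite -iotaD !addr0.
by rewrite /Defs.sh iota0 addr0.
Qed.

Lemma shsh u p q : sh (sh u p) q = sh u (p + q).
Proof. by rewrite /Defs.sh iotaD addrA. Qed.

Lemma sh_rat_frac u q n d : numq q = n -> denq q = d -> sh u q = sh u (rat_frac n d).
Proof. by move=> <- <-; rewrite /rat_frac divq_num_den. Qed.

(** An atom [(b, k, v)] stands for T^{(b)}_k(v), resp. Y^{(b)}_k(v). *)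
Definition atom := (nat * nat * U)%type.

Definition Mfun_atoms (a m : nat) (u : U) : seq atom :=
  let h := (1 / 2)%R : rat in
  let th := (1 / 3)%R : rat in
  match X with
  | TB r =>
      if (a <= r - 2)%N then [:: (a.-1, m, u); (a.+1, m, u)]
      else if a == (r - 1)%N then [:: ((r - 2)%N, m, u); (r, m.*2, u)]
      else if odd m then [:: ((r - 1)%N, m./2, u); ((r - 1)%N, m./2.+1, u)]
      else [:: ((r - 1)%N, m./2, sh u (- h)); ((r - 1)%N, m./2, sh u h)]
  | TC r =>
      if (a <= r - 2)%N then [:: (a.-1, m, u); (a.+1, m, u)]
      else if a == (r - 1)%N then
        (if odd m then [:: ((r - 2)%N, m, u); (r, m./2, u); (r, m./2.+1, u)]
         else [:: ((r - 2)%N, m, u); (r, m./2, sh u (- h)); (r, m./2, sh u h)])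
      else [:: ((r - 1)%N, m.*2, u)]
  | TF4 =>
      if a == 1%N then [:: (2%N, m, u)]
      else if a == 2%N then [:: (1%N, m, u); (3%N, m.*2, u)]
      else if a == 3%N then
        (if odd m then [:: (2%N, m./2, u); (2%N, m./2.+1, u); (4%N, m, u)]
         else [:: (2%N, m./2, sh u (- h)); (2%N, m./2, sh u h); (4%N, m, u)])
      else [:: (3%N, m, u)]
  | TG2 =>
      if a == 1%N then [:: (2%N, (3 * m)%N, u)]
      else if (m %% 3 == 0)%N then
        [:: (1%N, (m %/ 3)%N, sh u (- (2 * th))); (1%N, (m %/ 3)%N, u);
            (1%N, (m %/ 3)%N, sh u (2 * th))]
      else if (m %% 3 == 1)%N then
        [:: (1%N, (m %/ 3)%N, sh u (- th)); (1%N, (m %/ 3)%N, sh u th);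
            (1%N, (m %/ 3).+1, u)]
      else
        [:: (1%N, (m %/ 3)%N, u); (1%N, (m %/ 3).+1, sh u (- th));
            (1%N, (m %/ 3).+1, sh u th)]
  | _ => [seq (b, m, u) | b <- adj X a]
  end.

Definition Nfun_atoms (a m : nat) (u : U) : seq atom :=
  let h := (1 / 2)%R : rat in
  let th := (1 / 3)%R : rat in
  match X with
  | TB r =>
      if (a <= r - 2)%N then [:: (a.-1, m, u); (a.+1, m, u)]
      else if a == (r - 1)%N then
        [:: ((r - 2)%N, m, u); (r, m.*2.-1, u); (r, m.*2.+1, u);
            (r, m.*2, sh u (- h)); (r, m.*2, sh u h)]
      else if odd m then [::]
      else [:: ((r - 1)%N, m./2, u)]
  | TC r =>
      if (a <= r - 2)%N then [:: (a.-1, m, u); (a.+1, m, u)]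
      else if a == (r - 1)%N then
        (if odd m then [:: ((r - 2)%N, m, u)]
         else [:: ((r - 2)%N, m, u); (r, m./2, u)])
      else [:: ((r - 1)%N, m.*2.-1, u); ((r - 1)%N, m.*2.+1, u);
               ((r - 1)%N, m.*2, sh u (- h)); ((r - 1)%N, m.*2, sh u h)]
  | TF4 =>
      if a == 1%N then [:: (2%N, m, u)]
      else if a == 2%N then
        [:: (1%N, m, u); (3%N, m.*2.-1, u); (3%N, m.*2.+1, u);
            (3%N, m.*2, sh u (- h)); (3%N, m.*2, sh u h)]
      else if a == 3%N then
        (if odd m then [:: (4%N, m, u)] else [:: (2%N, m./2, u); (4%N, m, u)])
      else [:: (3%N, m, u)]
  | TG2 =>
      if a == 1%N then
        [:: (2%N, (3 * m - 2)%N, u); (2%N, (3 * m + 2)%N, u); (2%N, (3 * m)%N, u);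
            (2%N, (3 * m - 1)%N, sh u (- th)); (2%N, (3 * m + 1)%N, sh u (- th));
            (2%N, (3 * m)%N, sh u (- (2 * th)));
            (2%N, (3 * m - 1)%N, sh u th); (2%N, (3 * m + 1)%N, sh u th);
            (2%N, (3 * m)%N, sh u (2 * th))]
      else if (m %% 3 == 0)%N then [:: (1%N, (m %/ 3)%N, u)]
      else [::]
  | _ => [seq (b, m, u) | b <- adj X a]
  end.

Lemma Mfun_prod (R : comPzRingType) (T : nat -> nat -> U -> R) a m u :
  Mfun iota T X a m u = \prod_(x <- Mfun_atoms a m u) T x.1.1 x.1.2 x.2.
Proof.
rewrite /Mfun /Mfun_atoms; case: X => [r|r|r|r|||||] /=; try by rewrite big_map.
all: repeat case: ifP => _; rewrite ?big_cons ?big_nil /=; ring.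
Qed.

Lemma Nfun_prod (R : comPzRingType) (Y : nat -> nat -> U -> R) a m u :
  Nfun iota Y X a m u = \prod_(x <- Nfun_atoms a m u) (1 + Y x.1.1 x.1.2 x.2).
Proof.
rewrite /Nfun /Nfun_atoms; case: X => [r|r|r|r|||||] /=; try by rewrite big_map.
all: repeat case: ifP => _; rewrite ?big_cons ?big_nil /=; ring.
Qed.

(* [ring] compares atoms syntactically, so every atom is brought to the normal
   form T b (nat_affine c n j) (sh u (rat_frac p q)): shifts are merged and
   written in lowest terms, indices are written as affine functions of the
   parameter j with m = c j + n. *)
Ltac normalize_shifts :=
  repeat match goal with
  | |- context [Defs.sh ?io ?v ?q] =>
    lazymatch q with
    | rat_frac _ _ => fail
    | _ => let n := eval vm_compute in (numq q) in
           let d := eval vm_compute in (denq q) in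
           rewrite (@sh_rat_frac v q n d erefl erefl)
    end
  end.

Ltac normalize_indices T j :=
  repeat match goal with
  | |- context [T ?b ?k ?w] =>
    lazymatch k with
    | nat_affine _ _ _ => fail
    | _ => match eval pattern j in k with
           | ?F _ => let n0 := eval vm_compute in (F 0%N) in
                     let n1 := eval vm_compute in (F 1%N) in
                     let c := eval vm_compute in (n1 - n0)%N in
                     let E := fresh "E" in
                     assert (E : k = nat_affine c n0 j) by (rewrite /nat_affine; lia);
                     rewrite E; clear E
           end
    end
  end.

Ltac resolve_ifs :=
  repeat (rewrite ?big_cons ?big_nil /=; case: ifP => /= ?; try (exfalso; lia)).

Ltac monomial_identity T u j :=
  rewrite ?big_cons ?big_nil /= -(sh0 u) ?shsh;
  normalize_shifts; normalize_indices T j; ring.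

Lemma validx_range a m : validx X l (a, m) -> (1 <= a <= rank X)%N /\ (0 < m)%N.
Proof. by rewrite /validx /= => /andP[-> /andP[]]. Qed.

Lemma Mfun_shift_identity (A : comPzRingType) (T : nat -> nat -> U -> A) a m u :
  valid_dynkin X -> validx X l (a, m) ->
  Mfun iota T X a m (sh u (- tinv X a)) * Mfun iota T X a m (sh u (tinv X a))
    * \prod_(x <- Nfun_atoms a m u) (T x.1.1 x.1.2.-1 x.2 * T x.1.1 x.1.2.+1 x.2)
  = Mfun iota T X a m.-1 u * Mfun iota T X a m.+1 u
    * \prod_(x <- Nfun_atoms a m u)
        (T x.1.1 x.1.2 (sh x.2 (- tinv X x.1.1))
         * T x.1.1 x.1.2 (sh x.2 (tinv X x.1.1))).
Proof.
move=> vX /validx_range [/andP[a_ge1 ar] m_gt0].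
rewrite /Mfun /Nfun_atoms /tinv.
case: X vX ar => [r|r|r|r|||||] /= vX ar.
(* A_r, D_r, E_6, E_7, E_8: both sides are products over the same neighbours. *)
1,4,5,6,7: by rewrite !big_map -!big_split /=; apply: eq_bigr => b _; ring.
1,2,3: case: (pos_nat_mod2_cases m_gt0) => [][j ->];
  resolve_ifs; monomial_identity T u j.
case: (pos_nat_mod3_cases m_gt0) => [[][j ->]|[j ->]];
  resolve_ifs; monomial_identity T u j.
Qed.

Lemma Mfun_atoms_boundary a k u : valid_dynkin X -> (1 <= l)%N ->
  (1 <= a <= rank X)%N -> k = 0%N \/ k = (tnum X a * l)%N ->
  all (fun x : atom => ~~ validx X l x.1) (Mfun_atoms a k u).
Proof.
move=> vX l_gt0 ar hk; rewrite /Mfun_atoms.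
case: X vX ar hk => [r|r|r|r|||||] /= vX ar hk; case: hk => ->;
  try (apply/allP => x /mapP[b /mem_adj_range hb ->] /=;
       rewrite /validx /tnum /=; lia).
all: rewrite /validx /tnum /=; resolve_ifs; lia.
Qed.

(* The atoms of N^{(a)}_m either are admissible or have b outside the diagram
   (b = 0 or b = r + 1): no N-factor meets the boundary k = 0, t_b l. *)
Definition validx_or_outside (b k : nat) : bool :=
  validx X l (b, k) || ~~ (1 <= b <= rank X)%N.

Lemma Nfun_atoms_valid a m u : valid_dynkin X -> validx X l (a, m) ->
  all (fun x : atom => validx_or_outside x.1.1 x.1.2) (Nfun_atoms a m u).
Proof.
move=> vX; rewrite /Nfun_atoms /validx_or_outside.
case: X vX => [r|r|r|r|||||] /= vX;
  try (move=> hv; apply/allP => x /mapP[b /mem_adj_range hb ->] /=;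
       move: hv; rewrite /validx /tnum /=; lia).
all: rewrite /validx /tnum /=; resolve_ifs; lia.
Qed.

Lemma validx_neighbours a m : validx X l (a, m) ->
  (m.-1 = 0%N \/ validx X l (a, m.-1) \/ m.-1 = (tnum X a * l)%N) /\
  (m.+1 = 0%N \/ validx X l (a, m.+1) \/ m.+1 = (tnum X a * l)%N).
Proof. by rewrite /validx /=; move: (tnum X a * l)%N => t; lia. Qed.

(** * The Y-system in any ring satisfying the T-system *)

Section YSystem.
Variables (A : comPzRingType) (T Ti : nat -> nat -> U -> A).
Hypothesis T_inv : forall a k w, T a k w * Ti a k w = 1.
Hypothesis T_boundary : forall a k w, ~~ validx X l (a, k) -> T a k w = 1.
Hypothesis T_system : forall a m w, validx X l (a, m) ->
  T a m (sh w (- tinv X a)) * T a m (sh w (tinv X a))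
  = T a m.-1 w * T a m.+1 w + Mfun iota T X a m w.
Hypothesis vX : valid_dynkin X.
Hypothesis l_gt0 : (1 <= l)%N.

Lemma Ti_boundary a k w : ~~ validx X l (a, k) -> Ti a k w = 1.
Proof. by move=> hv; rewrite -(T_inv a k w) T_boundary // mul1r. Qed.

Lemma Mfun_inv a k w : Mfun iota T X a k w * Mfun iota Ti X a k w = 1.
Proof. by rewrite !Mfun_prod -big_split /=; apply: big1 => x _; apply: T_inv. Qed.

Definition phiY b k w : A :=
  if validx X l (b, k) then Mfun iota T X b k w * Ti b k.-1 w * Ti b k.+1 w
  else 0.

Definition phiYinv b k w : A :=
  if validx X l (b, k) then T b k.-1 w * T b k.+1 w * Mfun iota Ti X b k w
  else 0.

Lemma phiY_mul_inv a m w :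
  Mfun iota T X a m w * Ti a m.-1 w * Ti a m.+1 w
  * (T a m.-1 w * T a m.+1 w * Mfun iota Ti X a m w) = 1.
Proof.
transitivity ((Mfun iota T X a m w * Mfun iota Ti X a m w)
  * ((T a m.-1 w * Ti a m.-1 w) * (T a m.+1 w * Ti a m.+1 w))); first ring.
by rewrite Mfun_inv !T_inv !mulr1.
Qed.

Lemma one_add_phiY b k w : validx_or_outside b k ->
  1 + phiY b k w = T b k (sh w (- tinv X b)) * T b k (sh w (tinv X b))
                   * (Ti b k.-1 w * Ti b k.+1 w).
Proof.
have outside k' : ~~ (1 <= b <= rank X)%N -> ~~ validx X l (b, k').
  by rewrite /validx /=; case: (1 <= b <= rank X)%N.
rewrite /validx_or_outside /phiY; case: ifP => hv /= ho; last first.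
  by rewrite !T_boundary ?Ti_boundary ?outside // addr0 !mulr1.
rewrite T_system //.
have -> : 1 = T b k.-1 w * Ti b k.-1 w * (T b k.+1 w * Ti b k.+1 w).
  by rewrite !T_inv mulr1.
ring.
Qed.

Lemma one_add_phiYinv a k w : (1 <= a <= rank X)%N ->
  k = 0%N \/ validx X l (a, k) \/ k = (tnum X a * l)%N ->
  1 + phiYinv a k w = T a k (sh w (- tinv X a)) * T a k (sh w (tinv X a))
                      * Mfun iota Ti X a k w.
Proof.
move=> ar hk; rewrite /phiYinv; case: ifP => hv.
  rewrite T_system //.
  have -> : 1 = Mfun iota T X a k w * Mfun iota Ti X a k w by rewrite Mfun_inv.
  ring.
have {}hk : k = 0%N \/ k = (tnum X a * l)%N.
  by case: hk => [->|[h|->]]; [left|rewrite h in hv|right].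
have Mi1 : Mfun iota Ti X a k w = 1.
  rewrite Mfun_prod big1_seq // => -[[b k'] w'] /andP[_ hx].
  exact/Ti_boundary/(allP (Mfun_atoms_boundary w vX l_gt0 ar hk) _ hx).
by rewrite Mi1 addr0 !T_boundary ?hv // !mulr1.
Qed.

Lemma one_add_phiY_inv a m w : validx X l (a, m) ->
  (1 + phiY a m w)
  * (T a m.-1 w * T a m.+1 w * Ti a m (sh w (- tinv X a)) * Ti a m (sh w (tinv X a)))
  = 1.
Proof.
move=> hv; rewrite one_add_phiY ?/validx_or_outside ?hv //.
transitivity ((T a m (sh w (- tinv X a)) * Ti a m (sh w (- tinv X a)))
     * (T a m (sh w (tinv X a)) * Ti a m (sh w (tinv X a)))
     * ((T a m.-1 w * Ti a m.-1 w) * (T a m.+1 w * Ti a m.+1 w))); first ring.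
by rewrite !T_inv !mulr1.
Qed.

Lemma phiY_system a m u : validx X l (a, m) ->
  phiY a m (sh u (- tinv X a)) * phiY a m (sh u (tinv X a))
    * ((1 + phiYinv a m.-1 u) * (1 + phiYinv a m.+1 u))
  = Nfun iota phiY X a m u.
Proof.
move=> am; have [ar _] := validx_range am; have [lo hi] := validx_neighbours am.
set um := sh u (- tinv X a); set up := sh u (tinv X a).
pose G := \prod_(x <- Nfun_atoms a m u)
  (T x.1.1 x.1.2 (sh x.2 (- tinv X x.1.1)) * T x.1.1 x.1.2 (sh x.2 (tinv X x.1.1))).
pose D := \prod_(x <- Nfun_atoms a m u) (T x.1.1 x.1.2.-1 x.2 * T x.1.1 x.1.2.+1 x.2).
pose Di := \prod_(x <- Nfun_atoms a m u)
  (Ti x.1.1 x.1.2.-1 x.2 * Ti x.1.1 x.1.2.+1 x.2).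
have rhsE : Nfun iota phiY X a m u = G * Di.
  rewrite Nfun_prod -big_split /=; apply: eq_big_seq => x hx.
  exact: one_add_phiY (allP (Nfun_atoms_valid u vX am) x hx).
have D_inv : D * Di = 1.
  rewrite -big_split; apply: big1 => x _ /=.
  by rewrite mulrACA !T_inv mulr1.
rewrite rhsE /phiY am (one_add_phiYinv _ ar lo) (one_add_phiYinv _ ar hi).
set Mm := Mfun iota T X a m um; set Mp := Mfun iota T X a m up.
set M1 := Mfun iota T X a m.-1 u; set M2 := Mfun iota T X a m.+1 u.
set Mi1 := Mfun iota Ti X a m.-1 u; set Mi2 := Mfun iota Ti X a m.+1 u.
have key : Mm * Mp * D = M1 * M2 * G by apply: Mfun_shift_identity.
have M1_inv : M1 * Mi1 = 1 by apply: Mfun_inv.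
have M2_inv : M2 * Mi2 = 1 by apply: Mfun_inv.
transitivity (Mm * Mp * Mi1 * Mi2 * ((T a m.-1 um * Ti a m.-1 um)
  * (T a m.+1 um * Ti a m.+1 um) * (T a m.-1 up * Ti a m.-1 up)
  * (T a m.+1 up * Ti a m.+1 up))); first ring.
rewrite !T_inv !mulr1.
transitivity (Mm * Mp * Mi1 * Mi2 * (D * Di)); first by rewrite D_inv mulr1.
transitivity (Mm * Mp * D * Mi1 * Mi2 * Di); first ring.
rewrite key; transitivity (M1 * Mi1 * (M2 * Mi2) * G * Di); first ring.
by rewrite M1_inv M2_inv !mul1r.
Qed.

End YSystem.
End MNProducts.

Section Phi.
Variables (X : dynkin) (l : nat) (U : zmodType) (iota : rat -> U).
Hypothesis iotaD : forall p q, iota (p + q) = iota p + iota q.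
Hypothesis vX : valid_dynkin X.
Hypothesis l_gt0 : (1 <= l)%N.

Local Notation TT := (TT X l iota).
Local Notation TTinv := (TTinv X l iota).
Local Notation qT := (qproj (@Trel X l _ iota)).

Lemma Mfun_TT a m w : qT (Mfun iota (@Tv X l U) X a m w) = Mfun iota TT X a m w.
Proof. by rewrite !Mfun_prod rmorph_prod. Qed.

Lemma TT_inv a k w : TT a k w * TTinv a k w = 1.
Proof.
rewrite /Defs.TT /Defs.TTinv -rmorphM /Tv /Tiv /var_T.
case: insubP => [i _ _ | _]; last by rewrite mulr1 rmorph1.
by rewrite -(rmorph1 qT); apply: qproj_eq_rel; left; exists i, w.
Qed.

Lemma TT_boundary a k w : ~~ validx X l (a, k) -> TT a k w = 1.
Proof. by move=> hv; rewrite /Defs.TT /Tv /var_T insubN // rmorph1. Qed.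

Lemma TT_system a m w : validx X l (a, m) ->
  TT a m (sh iota w (- tinv X a)) * TT a m (sh iota w (tinv X a))
  = TT a m.-1 w * TT a m.+1 w + Mfun iota TT X a m w.
Proof.
move=> hv; have := @qproj_eq_rel _ (@Trel X l _ iota) _ _
  (or_intror (ex_intro _ a (ex_intro _ m (ex_intro _ w (conj hv erefl))))).
by rewrite !rmorphM rmorphD rmorphM -Mfun_TT.
Qed.

Definition phi_gen (y : YVar X l U) : TRing X l iota :=
  let: (kind, i, w) := y in
  let a := (val i).1 in let m := (val i).2 in
  if nat_of_ord kind == 0%N then phi_image X l iota a m w
  else if nat_of_ord kind == 1%N then
    TT a m.-1 w * TT a m.+1 w * Mfun iota TTinv X a m w
  else TT a m.-1 w * TT a m.+1 w * TTinv a m (sh iota w (- tinv X a))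
       * TTinv a m (sh iota w (tinv X a)).

Local Notation phi := (malg_eval phi_gen).

Lemma phi_Yv b k w : phi (Yv X l b k w) = phiY X l iota TT TTinv b k w.
Proof.
rewrite /Yv /var_Y /phiY; case: insubP => [i hv e|hv].
  by rewrite malg_eval_ucm /= e hv.
by rewrite (negbTE hv) rmorph0.
Qed.

Lemma phi_Yiv b k w : phi (Yiv X l b k w) = phiYinv X l iota TT TTinv b k w.
Proof.
rewrite /Yiv /var_Y /phiYinv; case: insubP => [i hv e|hv].
  by rewrite malg_eval_ucm /= e hv.
by rewrite (negbTE hv) rmorph0.
Qed.

Lemma phi_one_add_Yiv b k w :
  phi (1 + Yiv X l b k w) = 1 + phiYinv X l iota TT TTinv b k w.
Proof. by rewrite malg_evalD; congr (_ + _); [apply: malg_eval1 | apply: phi_Yiv]. Qed.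

Lemma phi_Nfun a m u :
  phi (Nfun iota (@Yv X l U) X a m u) = Nfun iota (phiY X l iota TT TTinv) X a m u.
Proof.
rewrite !Nfun_prod malg_eval_prod; apply: eq_bigr => x _.
by rewrite malg_evalD; congr (_ + _); [apply: malg_eval1 | apply: phi_Yv].
Qed.

Lemma phi_Yrel p : @Yrel X l _ iota p -> phi p = 0.
Proof.
case=> [[i [u ->]]|[[i [u ->]]|[a [m [u [hv ->]]]]]].
- apply: malg_eval_sub_eq0; rewrite [RHS]malg_eval1 malg_eval_ucmM.
  exact: (phiY_mul_inv X iota TT_inv (val i).1 (val i).2 u).
- apply: malg_eval_sub_eq0; rewrite [RHS]malg_eval1 malg_eval_1D_ucmM.
  have hv : validx X l ((val i).1, (val i).2).
    by rewrite -surjective_pairing; apply: valP.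
  move: (one_add_phiY_inv TT_inv TT_boundary TT_system u hv).
  by rewrite /phiY hv.
- apply: malg_eval_sub_eq0; rewrite [RHS]phi_Nfun.
  rewrite -(phiY_system iotaD TT_inv TT_boundary TT_system vX l_gt0 u hv).
  rewrite malg_evalM; congr (_ * _); rewrite malg_evalM; congr (_ * _).
  all: first [exact: phi_Yv | exact: phi_one_add_Yiv].
Qed.

Lemma phi_defines_ring_hom : defines_ring_hom X l iota.
Proof.
exists (quot_lift phi_Yrel) => a m u hv.
transitivity (phi (Yv X l a m u)); first exact: quot_liftE.
by rewrite phi_Yv /phiY hv.
Qed.

End Phi.

Theorem proposition3p8 (X : dynkin) (l : nat) :
  valid_dynkin X -> (2 <= l)%N ->
  defines_ring_hom X l iota_C /\
  (forall xi : Cc, ~ (exists q : rat, xi = ratr q * two_pi_i) ->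
     defines_ring_hom X l (iota_xi xi)).
Proof.
move=> vX l_ge2; have l_gt0 : (1 <= l)%N by lia.
split; first by apply: phi_defines_ring_hom => // p q; rewrite /iota_C rmorphD.
move=> xi _; apply: phi_defines_ring_hom => // p q.
by rewrite /iota_xi rmorphD raddfD.
Qed.
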